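(* Let $n\geq 2$ and let $T$ be a rooted binary phylogenetic $X$-tree with $|X|=n$ (edge lengths not yet fixed), with $c_T$ cherries. Let $X'\subset X$ consist of exactly one leaf from each cherry of $T$ (so $|X'|=c_T$), and let $\widetilde T=T_{\widetilde X}$ with $\widetilde X=X\setminus X'$. Then there exist strictly positive edge lengths $\lambda_1,\ldots,\lambda_{2n-2}$ for $T$ such that the ranking $\pi_T$ is strict and reversible with respect to $X'$, the leaf $x_1=\arg\max_{x\in X}FP_T(x)$ belongs to $\widetilde X$, and the leaf $x'=\arg\min_{x\in X}FP_T(x)$ does not belong to $\widetilde X$. In particular, $FP_T(x_1)>FP_T(x_2)>\cdots>FP_T(x_n)$ for a suitable labelling, and $FP_{\widetilde T}(x_1)<FP_{\widetilde T}(\widetilde x_2)<\cdots<FP_{\widetilde T}(\widetilde x_{n-c_T})$, where $\widetilde X=\{x_1,\widetilde x_2,\ldots,\widetilde x_{n-c_T}\}$ and $FP_T(\widetilde x_i)>FP_T(\widetilde x_j)$ if and only if $FP_{\widetilde T}(\widetilde x_i)<FP_{\widetilde T}(\widetilde x_j)$.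
   Context: A rooted binary phylogenetic $X$-tree ($X$ a finite nonempty set, $|X|=n$) is a rooted tree whose root $\rho$ has in-degree 0 and out-degree 2, all edges directed away from $\rho$, all other interior vertices have in-degree 1 and out-degree 2, and whose leaves are bijectively labelled by $X$ (for $|X|=1$ the tree may be a single vertex); it has $2n-2$ edges. Every edge $e$ has a strictly positive length $\lambda_e$. The Fair Proportion index of $x\in X$ is $FP_T(x)=\sum_{e\in P(T;\rho,x)}\lambda_e/D_e$, where $P(T;\rho,x)$ is the path from $\rho$ to $x$ and $D_e$ is the number of leaves descended from $e$. A cherry is a pair of leaves with the same parent. For $Y\subseteq X$, the induced subtree $T_Y$ is obtained from the minimal subtree of $T$ connecting $Y$ by suppressing all non-root vertices of in- and out-degree 1, adding the lengths of merged edges; if the root then has out-degree 1, it and its incident edge are deleted. The ranking $\pi_T$ orders $X$ by decreasing $FP_T$; it is strict if all values $FP_T(x)$ are pairwise distinct. For $X'\subset X$, $\widetilde X=X\setminus X'$ and $\widetilde T=T_{\widetilde X}$, a strict ranking $\pi_T$ is reversible with respect to $X'$ if for all distinct $x_i,x_j\in\widetilde X$, $FP_T(x_i)>FP_T(x_j)$ implies $FP_{\widetilde T}(x_i)<FP_{\widetilde T}(x_j)$. *)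

From HB Require Import structures.
From mathcomp Require Import all_boot all_order all_algebra.
From mathcomp Require Import reals.
Set Implicit Arguments. Unset Strict Implicit. Unset Printing Implicit Defensive.
Import Order.TTheory GRing.Theory Num.Theory.
Local Open Scope ring_scope.

Inductive tree := Lf (x : nat) | Nd (l r : tree).

(* The same trees with edge lengths: [WNd el er l r] has an edge of length [el]
   to the root of [l] and an edge of length [er] to the root of [r]. *)
Inductive wtree (R : Type) := WLf (x : nat) | WNd (el er : R) (l r : wtree R).
Arguments WLf {R} x.

Fixpoint leaves (t : tree) : seq nat :=
  match t with Lf x => [:: x] | Nd l r => leaves l ++ leaves r end.

Fixpoint tshape R (t : wtree R) : tree :=
  match t with WLf x => Lf x | WNd _ _ l r => Nd (tshape l) (tshape r) end.

Definition wleaves R (t : wtree R) := leaves (tshape t).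

Fixpoint pos_lengths (R : realType) (t : wtree R) : Prop :=
  match t with
  | WLf _ => True
  | WNd el er l r => 0 < el /\ 0 < er /\ pos_lengths l /\ pos_lengths r
  end.

(* T is a rooted binary phylogenetic X-tree, X = leaves T (labels distinct). *)
Definition phylo (t : tree) : bool := uniq (leaves t).

Fixpoint cherries (t : tree) : seq (nat * nat) :=
  match t with
  | Lf _ => [::]
  | Nd (Lf a) (Lf b) => [:: (a, b)]
  | Nd l r => cherries l ++ cherries r
  end.

(* Fair Proportion index: sum over edges e on the root-x path of
   lambda_e / D_e, D_e = number of leaves below e. *)
Fixpoint FP (R : realType) (t : wtree R) (x : nat) : R :=
  match t with
  | WLf _ => 0
  | WNd el er l r =>
      if x \in wleaves l then el / (size (wleaves l))%:R + FP l x
      else if x \in wleaves r then er / (size (wleaves r))%:R + FP r x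
      else 0
  end.

(* Restriction to the leaves in Y of the subtree spanned by Y and the root,
   suppressing degree-2 vertices; the first component is the length
   accumulated on the (pending) edge entering the returned subtree. *)
Fixpoint restr (R : realType) (Y : pred nat) (t : wtree R) : option (R * wtree R) :=
  match t with
  | WLf y => if Y y then Some (0, WLf y) else None
  | WNd el er l r =>
      match restr Y l, restr Y r with
      | Some (a, l'), Some (b, r') => Some (0, WNd (el + a) (er + b) l' r')
      | Some (a, l'), None => Some (el + a, l')
      | None, Some (b, r') => Some (er + b, r')
      | None, None => None
      end
  end.

(* Induced subtree T_Y: if the root ends up with out-degree 1, it and its
   incident (merged) edge are deleted, i.e. the pending length is dropped. *)
Definition induced (R : realType) (Y : pred nat) (t : wtree R) : option (wtree R) :=
  omap snd (restr Y t).

Definition strict_ranking (R : realType) (t : wtree R) : Prop :=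
  forall x y, x \in wleaves t -> y \in wleaves t -> x != y -> FP t x != FP t y.

(* strict pi_T is reversible w.r.t. X' (tt = induced tree on X \ X') *)
Definition reversible (R : realType) (t tt : wtree R) (X' : seq nat) : Prop :=
  strict_ranking t /\
  forall xi xj, xi \in wleaves t -> xi \notin X' -> xj \in wleaves t -> xj \notin X' ->
    xi != xj -> FP t xi > FP t xj -> FP tt xi < FP tt xj.

From HB Require Import structures.
From mathcomp Require Import all_boot all_order all_algebra.
From mathcomp Require Import reals.
From mathcomp Require Import ring lra.
Import Order.TTheory GRing.Theory Num.Theory.
Local Open Scope ring_scope.
Set Implicit Arguments. Unset Strict Implicit.

(* Let Y be the set of kept leaves (those not in X').  Since X' splits every
   cherry, below every interior vertex there is a kept and a removed leaf
   ("mixed" tree).  If the interior edge above a subtree s has length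
   c / (1/|Y below s| - 1/|s|) with c > 0, it contributes some amount to FP_T
   and exactly c more to FP_{T_Y}.  Choosing the constants c by the position of the edge,
   the sum of the c's along the path to a kept leaf x -- its gain g(x) -- is
   injective on the kept leaves.  The pendant lengths are free; they are
   chosen so that FP_T(x) = K - g(x)/2 for kept leaves and FP_T is small and
   injective on removed leaves.  Then FP_{T_Y}(x) = K + g(x)/2 - d for a
   constant d, so the ranking of the kept leaves is reversed. *)

Section InducedFP.
Variables (R : realType) (Y : pred nat).

(* For the induced tree T_Y this is exactly FP_{T_Y}, except for the
   stem that T_Y loses at its root (lemma [restr_FP]). *)
Fixpoint FP_in (t : wtree R) (x : nat) : R :=
  match t with
  | WLf _ => 0
  | WNd el er l r =>
      if x \in wleaves l then el / (count Y (wleaves l))%:R + FP_in l x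
      else if x \in wleaves r then er / (count Y (wleaves r))%:R + FP_in r x
      else 0
  end.

Lemma restr_leaves (W : wtree R) :
  match restr Y W with
  | None => filter Y (wleaves W) = [::]
  | Some (_, t') => wleaves t' = filter Y (wleaves W)
  end.
Proof.
elim: W => [y|el er l IHl r IHr] /=; first by rewrite /wleaves /=; case: (Y y).
move: IHl IHr; rewrite /wleaves /= filter_cat.
by case: (restr Y l) => [[a l']|]; case: (restr Y r) => [[b r']|] //= -> ->;
  rewrite ?cats0.
Qed.

Lemma restr_kept (W : wtree R) x : x \in wleaves W -> Y x ->
  exists a t', restr Y W = Some (a, t') /\ x \in wleaves t'.
Proof.
move=> Wx Yx; have := restr_leaves W.
have xf : x \in filter Y (wleaves W) by rewrite mem_filter Yx Wx.
case: (restr Y W) => [[a t'] E|E]; last by rewrite E in xf.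
by exists a, t'; rewrite E.
Qed.

(* FP in the restricted tree, plus the share of the pending root stem, is
   [FP_in]: merging edges adds their lengths, and D_e becomes |Y below e|. *)
Lemma restr_FP (W : wtree R) a t' x :
  restr Y W = Some (a, t') -> x \in wleaves W -> Y x ->
  a / (size (wleaves t'))%:R + FP t' x = FP_in W x.
Proof.
move=> + + Yx; elim: W a t' => [y|el er l IHl r IHr] a t' /=.
  by case: (Y y) => // -[<- <-]; rewrite mul0r add0r.
(* a child containing x survives, and its stem absorbs the pending length *)
have child s e : (forall a t', restr Y s = Some (a, t') -> x \in wleaves s ->
      a / (size (wleaves t'))%:R + FP t' x = FP_in s x) ->
    x \in wleaves s -> exists a1 s1, [/\ restr Y s = Some (a1, s1),
      x \in wleaves s1 & (e + a1) / (size (wleaves s1))%:R + FP s1 x =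
                        e / (count Y (wleaves s))%:R + FP_in s x].
  move=> IH xs; have [a1 [s1 [E xs1]]] := restr_kept xs Yx.
  have := restr_leaves s; rewrite E => s1E.
  exists a1, s1; split=> //; rewrite -(IH a1 s1 E xs) s1E size_filter; ring.
rewrite [wleaves (WNd _ _ _ _)]/wleaves /= -/(wleaves l) -/(wleaves r) mem_cat.
case xl: (x \in wleaves l) => /=; [move=> + _ | move=> + xr].
  have [a1 [l1 [-> xl1 <-]]] := child l el IHl xl.
  by case: (restr Y r) => [[b r1]|] [<- <-] //=; rewrite xl1 mul0r add0r.
have [b1 [r1 [-> xr1 <-]]] := child r er IHr xr.
have := restr_leaves l.
case: (restr Y l) => [[a1 l1]|] => [l1E|_] [<- <-] /=; rewrite xr //.
have -> : x \in wleaves l1 = false by rewrite l1E mem_filter xl andbF.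
by rewrite xr1 mul0r add0r.
Qed.
End InducedFP.

Definition isNd (t : tree) : bool := if t is Nd _ _ then true else false.

Lemma size_leaves_gt0 t : (0 < size (leaves t))%N.
Proof. by elim: t => //= l IHl r _; rewrite size_cat addn_gt0 IHl. Qed.

Lemma cherries_node l r c : c \in cherries l ++ cherries r -> c \in cherries (Nd l r).
Proof. by case: l => [a|l1 l2]; case: r => [b|r1 r2]. Qed.

Lemma cherry_leaves t c : c \in cherries t -> c.1 \in leaves t /\ c.2 \in leaves t.
Proof.
elim: t => [//|l IHl r IHr]; rewrite [leaves _]/= !mem_cat.
have sub : c \in cherries l ++ cherries r -> (c.1 \in leaves l) || (c.1 \in leaves r)
    /\ (c.2 \in leaves l) || (c.2 \in leaves r).
  by rewrite mem_cat => /orP [/IHl [-> ->] | /IHr [-> ->]]; rewrite ?orbT.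
case: l {IHl} sub => [a|l1 l2] sub; case: r {IHr} sub => [b|r1 r2] sub //=.
by rewrite inE => /eqP ->; rewrite !inE !eqxx orbT.
Qed.

Lemma cherry_exists t : isNd t -> exists c, c \in cherries t.
Proof.
elim: t => [//|l IHl r IHr] _.
case: l IHl => [a|l1 l2] IHl; last first.
  by have [c cl] := IHl isT; exists c; apply: cherries_node; rewrite mem_cat cl.
case: r IHr => [b|r1 r2] IHr; first by exists (a, b); rewrite inE.
by have [c cr] := IHr isT; exists c; apply: cherries_node; rewrite mem_cat cr orbT.
Qed.

Section Mixed.
Variable Y : pred nat.

(* [mixed t]: below every interior vertex of t there are a leaf of Y and a
   leaf outside Y.  This is the only property of X' the construction uses. *)
Fixpoint mixed (t : tree) : bool :=
  if t is Nd l r then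
    [&& has Y (leaves l ++ leaves r), has (predC Y) (leaves l ++ leaves r),
        mixed l & mixed r]
  else true.

(* Removing one leaf of every cherry leaves a mixed tree: any interior vertex
   lies above some cherry. *)
Lemma mixed_cherries t : (forall c, c \in cherries t -> Y c.1 != Y c.2) -> mixed t.
Proof.
elim: t => [//|l IHl r IHr] split_ch /=.
have [c cT] := @cherry_exists (Nd l r) isT; have [c1T c2T] := cherry_leaves cT.
have [u [v [uT vT Yu Yv]]] : exists u v,
    [/\ u \in leaves (Nd l r), v \in leaves (Nd l r), Y u & ~~ Y v].
  move: (split_ch c cT); case Y1: (Y c.1); case Y2: (Y c.2) => // _;
    [exists c.1, c.2 | exists c.2, c.1]; by rewrite Y1 Y2.
apply/and4P; split; [by apply/hasP; exists u | by apply/hasP; exists v | |].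
- by apply: IHl => c' cl; apply: split_ch; apply: cherries_node; rewrite mem_cat cl.
- by apply: IHr => c' cr; apply: split_ch; apply: cherries_node; rewrite mem_cat cr orbT.
Qed.
End Mixed.

(* The edge entering an interior
   vertex s and occupying the "slot" c (c = 1 for a left child, 2 + cap l for a
   right child with left sibling l) has length c / wt s; a pendant edge of leaf
   x has the free length p x.  Each interior edge then contributes
   c / (wt s * |s|) to FP_T and exactly c more to FP_{T_Y}, so FP_{T_Y} - FP_T
   at a kept leaf is the sum of the slots along its path, its "gain". *)
Section Construction.
Variables (R : realType) (Y : pred nat).

Definition nL (s : tree) : R := (size (leaves s))%:R.
Definition nY (s : tree) : R := (count Y (leaves s))%:R.
Definition wt (s : tree) : R := (nY s)^-1 - (nL s)^-1.

(* At a mixed interior vertex some leaves are dropped, so wt > 0. *)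
Lemma wt_gt0 l r : mixed Y (Nd l r) -> 0 < wt (Nd l r).
Proof.
case/and4P => hasY hasN _ _; rewrite /wt /nY /nL subr_gt0.
have cY : (0 < count Y (leaves (Nd l r)))%N by rewrite -has_count.
have cN : (count Y (leaves (Nd l r)) < size (leaves (Nd l r)))%N.
  by rewrite -(count_predC Y) -{1}[count Y _]addn0 ltn_add2l -has_count.
by rewrite ltf_pV2 ?ltr_nat // posrE ltr0n // (ltn_trans cY).
Qed.

(* A strict upper bound on the gains of paths inside t; right slots start
   above it so that left and right subtrees get disjoint gain ranges. *)
Fixpoint gain_cap (t : tree) : R :=
  if t is Nd l r then 3 + gain_cap l + gain_cap r else 1.

Lemma gain_cap_gt0 t : 0 < gain_cap t.
Proof. elim: t => [a|l IHl r IHr] /=; lra. Qed.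

Fixpoint pathsum (f : tree -> R -> R) (t : tree) (x : nat) : R :=
  match t with
  | Lf _ => 0
  | Nd l r => if x \in leaves l then f l 1 + pathsum f l x
              else if x \in leaves r then f r (2 + gain_cap l) + pathsum f r x else 0
  end.

Lemma pathsum_l f l r x : x \in leaves l ->
  pathsum f (Nd l r) x = f l 1 + pathsum f l x.
Proof. by move=> /= ->. Qed.

Lemma pathsum_r f l r x : x \notin leaves l -> x \in leaves r ->
  pathsum f (Nd l r) x = f r (2 + gain_cap l) + pathsum f r x.
Proof. by move=> /= /negbTE -> ->. Qed.

(* Per-edge gain (FP_{T_Y} - FP_T) and contribution to FP_T of an interior
   edge; [gain] and [base] are their sums along a path. *)
Definition gain_edge (s : tree) (c : R) : R := if isNd s then c else 0.
Definition fp_edge (s : tree) (c : R) : R := if isNd s then c / wt s / nL s else 0.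
Definition gain := pathsum gain_edge.
Definition base := pathsum fp_edge.

Definition edge_len (p : nat -> R) (s : tree) (c : R) : R :=
  if s is Lf x then p x else c / wt s.

Fixpoint build (p : nat -> R) (t : tree) : wtree R :=
  match t with
  | Lf x => WLf x
  | Nd l r =>
      WNd (edge_len p l 1) (edge_len p r (2 + gain_cap l)) (build p l) (build p r)
  end.

Lemma tshape_build p t : tshape (build p t) = t.
Proof. by elim: t => [a|l IHl r IHr] //=; rewrite IHl IHr. Qed.

Lemma wleaves_build p t : wleaves (build p t) = leaves t.
Proof. by rewrite /wleaves tshape_build. Qed.

Lemma FP_stem p t c x : x \in leaves t ->
  edge_len p t c / nL t + FP (build p t) x = fp_edge t c + base t x + p x.
Proof.
elim: t c x => [y|l IHl r IHr] c x.
  by rewrite inE => /eqP ->; rewrite /nL /fp_edge /base /= divr1; ring.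
have -> : fp_edge (Nd l r) c = c / wt (Nd l r) / nL (Nd l r) by [].
rewrite /= !wleaves_build mem_cat; case xl: (x \in leaves l) => /= xr.
  by rewrite IHl // /base pathsum_l //=; ring.
by rewrite xr IHr // /base pathsum_r ?xl //=; ring.
Qed.

Lemma FP_build p t x : isNd t -> x \in leaves t -> FP (build p t) x = base t x + p x.
Proof.
case: t => [//|l r] _ xt; move: (FP_stem p 1 xt).
rewrite /edge_len /fp_edge /=; lra.
Qed.

Lemma stem_in_node p l r c : mixed Y (Nd l r) ->
  edge_len p (Nd l r) c / nY (Nd l r) = fp_edge (Nd l r) c + gain_edge (Nd l r) c.
Proof.
move=> /wt_gt0 wt_pos.
have nYE : (nY (Nd l r))^-1 = wt (Nd l r) + (nL (Nd l r))^-1 by rewrite /wt subrK.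
rewrite /edge_len /fp_edge /gain_edge /= -mulrA nYE; field.
by rewrite (gt_eqF wt_pos) andbT pnatr_eq0 -lt0n size_leaves_gt0.
Qed.

Lemma FP_in_stem p t c x : mixed Y t -> Y x -> x \in leaves t ->
  edge_len p t c / nY t + FP_in Y (build p t) x =
  fp_edge t c + gain_edge t c + base t x + gain t x + p x.
Proof.
elim: t c x => [y|l IHl r IHr] c x.
  move=> _ Yx; rewrite inE => /eqP xy; subst x.
  by rewrite /nY /= Yx /fp_edge /gain_edge /base /gain /= divr1; ring.
move=> mix Yx; rewrite stem_in_node //; case/and4P: mix => _ _ ml mr.
rewrite /= !wleaves_build mem_cat; case xl: (x \in leaves l) => /= xr.
  by rewrite IHl // /base /gain !pathsum_l //; ring.
by rewrite xr IHr // /base /gain !pathsum_r ?xl //; ring.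
Qed.

Lemma FP_in_build p t x : mixed Y t -> isNd t -> Y x -> x \in leaves t ->
  FP_in Y (build p t) x = base t x + gain t x + p x.
Proof.
case: t => [//|l r] mix _ Yx xt; move: (FP_in_stem p 1 mix Yx xt).
rewrite stem_in_node //; lra.
Qed.

Lemma gain_bounds t x : 0 <= gain t x < gain_cap t.
Proof.
elim: t => [a|l IHl r IHr] /=; first by rewrite /gain /=; lra.
have := gain_cap_gt0 l; have := gain_cap_gt0 r; move: IHl IHr; rewrite /gain /= /gain_edge.
by case: (x \in leaves l); case: (x \in leaves r); case: (isNd l); case: (isNd r);
  move=> /andP [? ?] /andP [? ?] ? ?; apply/andP; split; lra.
Qed.

(* Kept leaves in different subtrees have different gains: a right interior
   slot exceeds every left gain, and a left leaf gains 0 only if the right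
   sibling is interior (two kept leaves never form a cherry). *)
Lemma gain_cross l r x y : mixed Y (Nd l r) -> x \in leaves l -> y \in leaves r ->
  Y x -> Y y -> gain_edge l 1 + gain l x != gain_edge r (2 + gain_cap l) + gain r y.
Proof.
move=> mix xl yr Yx Yy.
have := gain_bounds l x; have := gain_bounds r y; have := gain_cap_gt0 l.
case: r mix yr => [b|r1 r2] mix yr; last first.
  rewrite /gain_edge /= => ? /andP [? ?] /andP [? ?].
  by apply/negP => /eqP; case: (isNd l); lra.
move: yr; rewrite inE => /eqP yb; subst y.
case: l mix xl => [a|l1 l2] mix xl; last first.
  by rewrite /gain_edge /gain /= => ? ? /andP [? ?]; apply/negP => /eqP; lra.
move: xl mix; rewrite inE => /eqP xa; subst x.
by case/and4P => _; rewrite /= Yx Yy.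
Qed.

Lemma gain_inj t x y : uniq (leaves t) -> mixed Y t -> x \in leaves t -> y \in leaves t ->
  Y x -> Y y -> x != y -> gain t x != gain t y.
Proof.
elim: t x y => [a|l IHl r IHr] x y.
  by move=> _ _; rewrite !inE => /eqP -> /eqP ->; rewrite eqxx.
rewrite /= cat_uniq => /and3P [ul disj ur] mix; have /and4P [_ _ ml mr] := mix.
have notl z : z \in leaves r -> z \notin leaves l.
  by move=> zr; apply/negP => zl; case/negP: disj; apply/hasP; exists z.
rewrite !mem_cat => /orP [xl|xr] /orP [yl|yr] Yx Yy xy; rewrite /gain.
- by rewrite !pathsum_l // (inj_eq (addrI _)) IHl.
- by rewrite pathsum_l ?pathsum_r ?notl //; apply: gain_cross.
- by rewrite pathsum_r ?notl ?pathsum_l // eq_sym; apply: gain_cross.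
- by rewrite !pathsum_r ?notl // (inj_eq (addrI _)) IHr.
Qed.

Lemma build_pos p t : mixed Y t -> {in leaves t, forall x, 0 < p x} ->
  pos_lengths (build p t).
Proof.
have edge_pos s c : mixed Y s -> 0 < c -> {in leaves s, forall x, 0 < p x} ->
    0 < edge_len p s c.
  case: s => [y|l r] mix c_pos p_pos /=; first by apply: p_pos; rewrite inE.
  by rewrite divr_gt0 // wt_gt0.
elim: t => [//|l IHl r IHr] mix p_pos /=; have /and4P [_ _ ml mr] := mix.
have pl : {in leaves l, forall x, 0 < p x} by move=> x xl; rewrite p_pos // mem_cat xl.
have pr : {in leaves r, forall x, 0 < p x} by move=> x xr; rewrite p_pos // mem_cat xr orbT.
have c_pos : 0 < 2 + gain_cap l :> R by have := gain_cap_gt0 l; lra.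
by split; [exact: edge_pos ml ltr01 pl | split; [exact: edge_pos mr c_pos pr | auto]].
Qed.

End Construction.

Lemma seq_argmax (R : realDomainType) (f : nat -> R) (s : seq nat) : s != [::] ->
  exists2 m, m \in s & {in s, forall y, f y <= f m}.
Proof.
elim: s => [//|a s IH] _.
have [->|/IH [m ms m_max]] := eqVneq s [::].
  by exists a; rewrite ?inE // => y; rewrite inE => /eqP ->.
have [am|ma] := lerP (f a) (f m).
  by exists m; [rewrite inE ms orbT | move=> y; rewrite inE => /orP [/eqP ->|/m_max]].
exists a; first by rewrite inE eqxx.
by move=> y; rewrite inE => /orP [/eqP -> // | /m_max ym]; apply: le_trans ym (ltW ma).
Qed.

Lemma strict_argmax (R : realDomainType) (f : nat -> R) (s : seq nat) : s != [::] ->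
  {in s &, forall x y, x != y -> f x != f y} ->
  exists2 m, m \in s & {in s, forall y, y != m -> f y < f m}.
Proof.
move=> /(seq_argmax f) [m ms m_max] f_inj; exists m => // y ys ym.
by rewrite lt_neqAle f_inj ?m_max.
Qed.

(* Pendant lengths are
   chosen so that FP_T equals [target]: kept leaves get level - gain/2, removed
   leaves get pairwise distinct values just above [offset], which bounds the
   interior contributions, so that all pendant lengths are positive and kept
   leaves rank above removed ones.  In T_Y a kept leaf gets level + gain/2 up
   to a common constant, which reverses the ranking of the kept leaves. *)
Section Witness.
Variables (R : realType) (Y : pred nat) (T : tree).
Hypotheses (T_uniq : uniq (leaves T)) (T_mixed : mixed Y T) (T_node : isNd T).

Definition offset : R := \sum_(y <- leaves T) `|base R Y T y|.
Definition level : R := offset + 2 + gain_cap R T.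
Definition target (x : nat) : R :=
  if Y x then level - gain R T x / 2 else offset + (x.+1)%:R^-1.
Definition pendant (x : nat) : R := target x - base R Y T x.
Definition witness : wtree R := build Y pendant T.

Lemma base_le_offset x : x \in leaves T -> `|base R Y T x| <= offset.
Proof. by move=> xT; rewrite /offset (bigD1_seq x) //= lerDl sumr_ge0. Qed.

Lemma target_kept x : Y x -> target x = level - gain R T x / 2.
Proof. by rewrite /target => ->. Qed.

Lemma target_removed_bounds x : ~~ Y x -> offset < target x <= offset + 1.
Proof.
move=> /negbTE Yx; rewrite /target Yx ltrDl lerD2l invr_gt0 ltr0n /=.
by rewrite invf_le1 ?ltr0n // ler1n.
Qed.

Lemma target_kept_bounds x : Y x -> offset + 2 < target x.
Proof. by move=> Yx; have := gain_bounds R T x; rewrite /target /level Yx; lra. Qed.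

Lemma target_gt_offset x : offset < target x.
Proof.
case Yx: (Y x); last by case/andP: (target_removed_bounds (negbT Yx)).
by have := target_kept_bounds Yx; lra.
Qed.

Lemma target_sep x y : Y x -> ~~ Y y -> target y < target x.
Proof.
by move=> /target_kept_bounds ? /target_removed_bounds /andP [? ?]; lra.
Qed.

(* Distinct leaves have distinct targets: by the gain for kept leaves and by
   the label for removed ones. *)
Lemma target_inj : {in leaves T &, forall x y, x != y -> target x != target y}.
Proof.
move=> x y xT yT xy; case Yx: (Y x); case Yy: (Y y).
- have := gain_inj R T_uniq T_mixed xT yT Yx Yy xy.
  by rewrite /target Yx Yy; apply: contraNN => /eqP ?; apply/eqP; lra.
- by rewrite gt_eqF // target_sep ?Yy.
- by rewrite lt_eqF // target_sep ?Yx.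
- rewrite /target Yx Yy (inj_eq (addrI _)) (inj_eq (invr_inj)) eqr_nat eqSS.
  exact: xy.
Qed.

Lemma kept_and_removed :
  (exists2 u, u \in leaves T & Y u) /\ (exists2 v, v \in leaves T & ~~ Y v).
Proof.
case: T T_node T_mixed => // l r _ /and4P [/hasP [u uT Yu] /hasP [v vT Yv] _ _].
by split; [exists u | exists v].
Qed.

Lemma witness_shape : tshape witness = T.
Proof. exact: tshape_build. Qed.

Lemma wleaves_witness : wleaves witness = leaves T.
Proof. exact: wleaves_build. Qed.

Lemma witness_pos : pos_lengths witness.
Proof.
apply: build_pos => // x xT; have := base_le_offset xT; have := target_gt_offset x.
have := ler_norm (base R Y T x); rewrite /pendant; lra.
Qed.

Lemma FP_witness x : x \in leaves T -> FP witness x = target x.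
Proof. by move=> xT; rewrite FP_build // /pendant; ring. Qed.

(* In the induced tree, kept leaves have FP = level + gain/2 - d for a
   constant d (the share of the root stem dropped by [induced]). *)
Lemma induced_witness : exists2 Wt, induced Y witness = Some Wt & exists d : R,
  {in leaves T, forall x, Y x -> FP Wt x = level + gain R T x / 2 - d}.
Proof.
have [[u uT Yu] _] := kept_and_removed.
have uW : u \in wleaves witness by rewrite wleaves_witness.
have [a [Wt [WE _]]] := restr_kept uW Yu.
exists Wt; first by rewrite /induced WE.
exists (a / (size (wleaves Wt))%:R) => x xT Yx.
have xW : x \in wleaves witness by rewrite wleaves_witness.
have := restr_FP WE xW Yx.
rewrite FP_in_build // /pendant target_kept // => ?.
by rewrite {1}(splitr (gain R T x)); lra.
Qed.

Lemma FP_witness_inj : {in leaves T &, forall x y, x != y -> FP witness x != FP witness y}.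
Proof. by move=> x y xT yT xy; rewrite !FP_witness //; apply: target_inj. Qed.

Lemma leaves_T_neq_nil : leaves T != [::].
Proof. by rewrite -size_eq0 -lt0n size_leaves_gt0. Qed.

Lemma witness_argmax : exists2 x1, x1 \in leaves T &
  Y x1 /\ {in leaves T, forall y, y != x1 -> FP witness y < FP witness x1}.
Proof.
have [m mT m_max] := strict_argmax leaves_T_neq_nil FP_witness_inj.
exists m => //; split => //; case Ym: (Y m) => //.
have [[u uT Yu] _] := kept_and_removed.
have um : u != m by apply: contraTneq Yu => ->; rewrite Ym.
have := m_max u uT um; rewrite !FP_witness //.
by rewrite ltNge (ltW (target_sep Yu (negbT Ym))).
Qed.

Lemma witness_argmin : exists2 x', x' \in leaves T &
  ~~ Y x' /\ {in leaves T, forall y, y != x' -> FP witness x' < FP witness y}.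
Proof.
have opp_inj : {in leaves T &, forall x y, x != y -> - FP witness x != - FP witness y}.
  by move=> x y xT yT xy; rewrite (inj_eq oppr_inj) FP_witness_inj.
have [m mT m_max] := strict_argmax leaves_T_neq_nil opp_inj.
exists m => //; split=> [|y yT ym]; last by rewrite -ltrN2 m_max.
apply/negP => Ym; have [_ [v vT Yv]] := kept_and_removed.
have vm : v != m by apply: contraNneq Yv => ->.
have := m_max v vT vm; rewrite ltrN2 !FP_witness //.
by rewrite ltNge (ltW (target_sep Ym Yv)).
Qed.
End Witness.

Theorem theorem2 (R : realType) (T : tree) (X' : seq nat) :
  phylo T -> (2 <= size (leaves T))%N ->
  (forall x, x \in X' -> exists2 c, c \in cherries T & x = c.1 \/ x = c.2) ->
  (forall c, c \in cherries T -> (c.1 \in X') != (c.2 \in X')) ->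
  exists (W : wtree R),
    [/\ tshape W = T, pos_lengths W &
    exists2 Wt : wtree R, induced (fun x => x \notin X') W = Some Wt &
      [/\ reversible W Wt X',
          exists2 x1, x1 \in leaves T &
            x1 \notin X' /\
            (forall y, y \in leaves T -> y != x1 -> FP W y < FP W x1) &
          exists2 x', x' \in leaves T &
            x' \in X' /\
            (forall y, y \in leaves T -> y != x' -> FP W x' < FP W y)]].
Proof.
move=> T_uniq T_size _ split_cherries.
pose Y : pred nat := fun x => x \notin X'.
have T_mixed : mixed Y T.
  by apply: mixed_cherries => c /split_cherries; rewrite /Y (inj_eq negb_inj).
have T_node : isNd T by case: T T_size {T_uniq split_cherries T_mixed}.
have [Wt WtE [d FP_Wt]] := induced_witness R T_mixed T_node.
exists (witness R Y T); split; [exact: witness_shape | exact: witness_pos |].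
exists Wt => //; split.
- split=> [x y | xi xj]; rewrite !wleaves_witness; first exact: FP_witness_inj.
  move=> xiT Yi xjT Yj _; rewrite !FP_witness // !FP_Wt // !target_kept //; lra.
- have [x1 x1T [Yx1 x1_max]] := witness_argmax R T_uniq T_mixed T_node.
  by exists x1.
- have [x' x'T [Yx' x'_min]] := witness_argmin R T_uniq T_mixed T_node.
  by exists x' => //; split=> //; apply: negbNE.
Qed.
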